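(* Let $H$ be a Hilbert space of dimension $N>1$, let $\mathcal F=\mathcal F(H)$ be the full Fock space, and let $v\in H$ with $\|v\|=1$. Then $$\mathbb{C}\Omega\oplus\sum_{w\in H\ominus\{v\}}\operatorname{Ran}(T_w)=N(T_v^* ),$$ where $H\ominus\{v\}=\{w\in H:\langle w,v\rangle=0\}$, $\operatorname{Ran}$ denotes range and $N(T_v^* )$ is the kernel of $T_v^*$.
   Context: $\mathcal F(H)=\mathbb{C}\Omega\oplus H\oplus(H\otimes H)\oplus\cdots$ (Hilbert direct sum, $\Omega$ a fixed unit vector). For $v\in H$, $T_v$ is the operator on $\mathcal F$ with $T_v\Omega=v$ and $T_v\xi=\xi\otimes v$ for $\xi\in H^{\otimes n}$, $n\ge1$. The sum on the left is the closed linear span of the indicated subspaces. *)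

From HB Require Import structures.
From mathcomp Require Import all_boot all_order all_algebra.
From mathcomp Require Import all_classical all_reals ereal esum.
From mathcomp Require Import complex.

Set Implicit Arguments.
Unset Strict Implicit.
Unset Printing Implicit Defensive.

Import Order.TTheory GRing.Theory Num.Theory.
Local Open Scope classical_set_scope.
Local Open Scope ring_scope.

(* Concrete model: H = l^2(I) for an index set I (an orthonormal basis of H,
   so dim H = |I|); H^{(x) n} = l^2(I^n); the full Fock space
   F(H) = l^2(seq I) (words of length n <-> the n-th tensor power,
   the empty word <-> Omega). *)

Section Fock.
Variable R : realType.
Local Notation C := R[i].

Definition sqmod (z : C) : R := complex.Re z ^+ 2 + complex.Im z ^+ 2.

Definition sqnorm {T : choiceType} (f : T -> C) : \bar R :=
  esum [set: T] (fun t => (sqmod (f t))%:E).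

Definition l2 {T : choiceType} (f : T -> C) : Prop := (sqnorm f < +oo)%E.

Definition rsum {T : choiceType} (a : T -> R) : R :=
  fine (esum [set: T] (fun t => (Num.max (a t) 0)%:E)) -
  fine (esum [set: T] (fun t => (Num.max (- a t) 0)%:E)).

Definition csum {T : choiceType} (a : T -> C) : C :=
  Complex (rsum (fun t => complex.Re (a t))) (rsum (fun t => complex.Im (a t))).

(* inner product on l^2(T), linear in the first variable *)
Definition inner {T : choiceType} (f g : T -> C) : C :=
  csum (fun t => f t * conjc (g t)).

Variable I : choiceType.

Definition Hsp : set (I -> C) := [set v | l2 v].
Definition Fock : set (seq I -> C) := [set f | l2 f].

Definition Omega : seq I -> C := fun u => (u == [::])%:R.

(* creation operator T_v : T_v Omega = v, T_v xi = xi (x) v;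
   on coordinates (T_v f)(rcons w i) = f w * v i, (T_v f)([::]) = 0 *)
Definition Tcre (v : I -> C) (f : seq I -> C) : seq I -> C :=
  fun u => match u with
           | [::] => 0
           | x :: s => f (belast x s) * v (last x s)
           end.

Definition Ran (T : (seq I -> C) -> (seq I -> C)) : set (seq I -> C) :=
  [set f | exists2 g, Fock g & f = T g].

(* h = T^* f  (defining relation of the adjoint) *)
Definition adjoint_rel (T : (seq I -> C) -> (seq I -> C)) (f h : seq I -> C) :=
  Fock h /\ forall g, Fock g -> inner (T g) f = inner g h.

Definition ker_adj (T : (seq I -> C) -> (seq I -> C)) : set (seq I -> C) :=
  [set f | Fock f /\ adjoint_rel T f (fun _ => 0)].

Definition lspan (S : set (seq I -> C)) : set (seq I -> C) :=
  [set f | exists (n : nat) (c : 'I_n -> C) (g : 'I_n -> seq I -> C),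
      (forall k, S (g k)) /\ f = (fun u => \sum_(k < n) c k * g k u)].

Definition cspan (S : set (seq I -> C)) : set (seq I -> C) :=
  [set f | Fock f /\ forall e : R, 0 < e ->
      exists2 g, lspan S g &
        (sqnorm (fun u => (f u - g u)%R) < (e ^+ 2)%:E)%E].

Definition lhs_set (v : I -> C) : set (seq I -> C) :=
  [set f | exists c : C, f = (fun u => c * Omega u)] `|`
  [set f | exists2 w, (Hsp w /\ inner w v = 0) & Ran (Tcre w) f].

End Fock.

From HB Require Import structures.
From mathcomp Require Import all_boot all_order all_algebra.
From mathcomp Require Import all_classical all_reals ereal esum.
From mathcomp Require Import complex.
From mathcomp Require Import finmap.
From mathcomp Require Import ring lra.

Set Implicit Arguments.
Unset Strict Implicit.
Unset Printing Implicit Defensive.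

Import Order.TTheory GRing.Theory Num.Theory.
Local Open Scope classical_set_scope.
Local Open Scope ring_scope.

(* Split the words by their last letter: every f in F(H) is the l^2 sum
   f = f([::]) Omega + sum_xi T_(f_xi) delta_xi, where f_xi i = f (xi.i) is the
   slice of f at xi.  Since <T_v delta_xi, f> is the conjugate of <f_xi, v>, f is
   in N(T_v^* ) iff every slice is orthogonal to v, and then the finite
   truncations of this expansion lie in the span of C Omega and the ranges of
   the T_w, w orthogonal to v, and converge to f.  Conversely Omega and T_w h
   are orthogonal to Ran T_v since <T_v g, T_w h> = <g, h> <v, w>, and
   orthogonality to Ran T_v passes to closed linear spans. *)

Lemma eq0_norm_le_mul (R : realFieldType) (x K : R) :
  0 <= K -> (forall e, 0 < e -> `|x| <= e * K) -> x = 0.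
Proof.
move=> K0 H; apply/eqP; rewrite -normr_le0; apply/ler_addgt0Pr => e e0.
have K1 : 0 < K + 1 by lra.
apply: le_trans (H _ (divr_gt0 e0 K1)) _.
by rewrite add0r mulrAC ler_pdivrMr // ler_pM2l //; lra.
Qed.

Lemma ler_sum_sub_uniq (R : numDomainType) (T : eqType) (a : T -> R) (s0 s : seq T) :
  (forall t, 0 <= a t) -> uniq s0 -> uniq s -> {subset s0 <= s} ->
  \sum_(x <- s0) a x <= \sum_(x <- s) a x.
Proof.
move=> a0 u0 u sub.
have pe : perm_eq [seq x <- s | x \in s0] s0.
  apply: uniq_perm => //; first exact: filter_uniq.
  by move=> x; rewrite mem_filter; case: (boolP (x \in s0)) => // /sub ->.
rewrite -(perm_big _ pe) /= big_filter big_mkcond /=.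
by apply: ler_sum => i _; case: ifP.
Qed.

Lemma sum_pmap (R : nmodType) (T U : Type) (f : T -> option U) (G : U -> R) (s : seq T) :
  \sum_(x <- s) oapp G 0 (f x) = \sum_(p <- pmap f s) G p.
Proof.
elim: s => [|x s IH]; first by rewrite !big_nil.
by rewrite big_cons /=; case: (f x) => [p|] /=; rewrite ?big_cons IH // add0r.
Qed.

Lemma sum_pred1 (R : nmodType) (T : eqType) (s : seq T) (t : T) (c : R) : uniq s ->
  \sum_(x <- s) (if x == t then c else 0) = if t \in s then c else 0.
Proof.
elim: s => [|y s IH]; first by rewrite big_nil.
rewrite big_cons /= in_cons => /andP [ys us]; rewrite IH //.
case: (eqVneq y t) => [<-|yt]; first by rewrite (negPf ys) addr0.
by rewrite add0r; case: ifP => // /eqP ty; rewrite ty eqxx in yt.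
Qed.

Section UnorderedSum.
Variables (R : realType) (T : choiceType).
Implicit Types (a b : T -> R) (s : seq T).

Local Notation esumT a := (esum [set: T] (fun t => (a t)%:E)).

Definition has_sum a l := forall e : R, 0 < e -> exists s0 : seq T,
  forall s, uniq s -> {subset s0 <= s} -> `|l - \sum_(x <- s) a x| < e.

Definition abs_summable a :=
  exists M, forall s, uniq s -> \sum_(x <- s) `|a x| <= M.

Lemma esum_ge_sum a s : (forall t, 0 <= a t) -> uniq s ->
  ((\sum_(x <- s) a x)%:E <= esumT a)%E.
Proof.
move=> a0 us; rewrite -sumEFin fsbig_seq //; apply: esum_ge.
by exists [set` s] => //; split=> //; exact: finite_seq.
Qed.

Lemma esum_le_sums a M : (forall t, 0 <= a t) ->
  (forall s, uniq s -> \sum_(x <- s) a x <= M) -> (esumT a <= M%:E)%E.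
Proof.
move=> a0 H; apply: ge_ereal_sup => _ [X [finX _] <-].
rewrite fsbig_finite // sumEFin lee_fin; apply: H; exact: fset_uniq.
Qed.

Lemma esum_approx a e : (forall t, 0 <= a t) -> esumT a \is a fin_num -> 0 < e ->
  exists2 s, uniq s & fine (esumT a) - e < \sum_(x <- s) a x.
Proof.
move=> a0 fa e0.
have : ((fine (esumT a) - e)%:E < esumT a)%E.
  by rewrite -{2}(fineK fa) lte_fin ltrBlDr ltrDl.
move=> /ereal_sup_gt [_ [X [finX _] <-]].
rewrite fsbig_finite // sumEFin lte_fin => H.
by exists (fset_set X) => //; exact: fset_uniq.
Qed.

Lemma esum_fin_num a b : abs_summable a -> (forall t, 0 <= b t <= `|a t|) ->
  esumT b \is a fin_num.
Proof.
move=> [M HM] hb; rewrite ge0_fin_numE; last first.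
  by apply: esum_ge0 => t _; rewrite lee_fin; case/andP: (hb t).
apply: (@le_lt_trans _ _ M%:E); last exact: ltry.
apply: esum_le_sums => [t|s us]; first by case/andP: (hb t).
by apply: le_trans (HM s us); apply: ler_sum => i _; case/andP: (hb i).
Qed.

Lemma has_sum_rsum a : abs_summable a -> has_sum a (rsum a).
Proof.
move=> sa e e0.
set p := fun t => Num.max (a t) 0; set n := fun t => Num.max (- a t) 0.
have pnE t : a t = p t - n t by rewrite /p /n !maxEle; case: ifP; case: ifP; lra.
have hp t : 0 <= p t <= `|a t|.
  by rewrite /p maxEle; case: ifP => h; rewrite ?lexx ?normr_ge0 ?ler_norm //; lra.
have hn t : 0 <= n t <= `|a t|.
  by rewrite /n -normrN maxEle; case: ifP => h; rewrite ?lexx ?normr_ge0 ?ler_norm //; lra.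
have p0 t : 0 <= p t by case/andP: (hp t).
have n0 t : 0 <= n t by case/andP: (hn t).
have fp := esum_fin_num sa hp; have fn := esum_fin_num sa hn.
have e20 : 0 < e / 2 by rewrite divr_gt0.
have [s1 u1 H1] := esum_approx p0 fp e20.
have [s2 u2 H2] := esum_approx n0 fn e20.
exists (s1 ++ s2) => s us sub.
have le1 : \sum_(x <- s1) p x <= \sum_(x <- s) p x.
  by apply: ler_sum_sub_uniq => // x hx; apply: sub; rewrite mem_cat hx.
have le2 : \sum_(x <- s2) n x <= \sum_(x <- s) n x.
  by apply: ler_sum_sub_uniq => // x hx; apply: sub; rewrite mem_cat hx orbT.
have up1 : \sum_(x <- s) p x <= fine (esumT p).
  by rewrite -lee_fin fineK //; exact: esum_ge_sum.
have up2 : \sum_(x <- s) n x <= fine (esumT n).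
  by rewrite -lee_fin fineK //; exact: esum_ge_sum.
rewrite (eq_bigr _ (fun t _ => pnE t)) sumrB /rsum -/p -/n.
rewrite ltr_norml; apply/andP; split; lra.
Qed.

Lemma has_sum_unique a l1 l2 : has_sum a l1 -> has_sum a l2 -> l1 = l2.
Proof.
move=> H1 H2; apply/eqP; rewrite -subr_eq0; apply/eqP.
apply: (@eq0_norm_le_mul _ _ 1) => // e e0; rewrite mulr1.
have e20 : 0 < e / 2 by rewrite divr_gt0.
have [s1 S1] := H1 _ e20; have [s2 S2] := H2 _ e20.
set s := undup (s1 ++ s2); have u : uniq s := undup_uniq _.
have A : `|l1 - \sum_(x <- s) a x| < e / 2.
  by apply: S1 => // x hx; rewrite mem_undup mem_cat hx.
have B : `|l2 - \sum_(x <- s) a x| < e / 2.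
  by apply: S2 => // x hx; rewrite mem_undup mem_cat hx orbT.
have := ler_normB (l1 - \sum_(x <- s) a x) (l2 - \sum_(x <- s) a x).
rewrite opprB addrA subrK; lra.
Qed.

Lemma eq_has_sum a b l : a =1 b -> has_sum a l -> has_sum b l.
Proof.
move=> ab Ha e e0; have [s0 S] := Ha e e0; exists s0 => s u sub.
by rewrite -(eq_bigr _ (fun t _ => ab t)); exact: S.
Qed.

Lemma has_sum0 : has_sum (fun=> 0) 0.
Proof. by move=> e e0; exists [::] => s _ _; rewrite big1 // subr0 normr0. Qed.

Lemma has_sumD a b la lb : has_sum a la -> has_sum b lb ->
  has_sum (fun t => a t + b t) (la + lb).
Proof.
move=> Ha Hb e e0; have e20 : 0 < e / 2 by rewrite divr_gt0.
have [s1 S1] := Ha _ e20; have [s2 S2] := Hb _ e20.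
exists (s1 ++ s2) => s u sub.
have A : `|la - \sum_(x <- s) a x| < e / 2.
  by apply: S1 => // x hx; apply: sub; rewrite mem_cat hx.
have B : `|lb - \sum_(x <- s) b x| < e / 2.
  by apply: S2 => // x hx; apply: sub; rewrite mem_cat hx orbT.
have := ler_normD (la - \sum_(x <- s) a x) (lb - \sum_(x <- s) b x).
rewrite big_split /= opprD addrACA; lra.
Qed.

Lemma has_sumZ k a la : has_sum a la -> has_sum (fun t => k * a t) (k * la).
Proof.
move=> Ha e e0; have k0 : 0 < `|k| + 1 by rewrite ltr_wpDl.
have [s1 S1] := Ha _ (divr_gt0 e0 k0); exists s1 => s u sub.
have := S1 s u sub; rewrite ltr_pdivlMr // => A.
rewrite -mulr_sumr -mulrBr normrM; apply: le_lt_trans A.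
by rewrite mulrC ler_wpM2l //; lra.
Qed.

Lemma has_sum_norm_le a la B : has_sum a la ->
  (forall s, uniq s -> `|\sum_(x <- s) a x| <= B) -> `|la| <= B.
Proof.
move=> Ha HB; apply/ler_addgt0Pr => e e0.
have [s0 S] := Ha e e0; have u : uniq (undup s0) := undup_uniq _.
have A := S _ u (fun x hx => etrans (mem_undup _ _) hx).
have := ler_normD (la - \sum_(x <- undup s0) a x) (\sum_(x <- undup s0) a x).
have := HB _ u; rewrite subrK; lra.
Qed.

End UnorderedSum.
Section ComplexSum.
Variables (R : realType).
Local Notation C := R[i].
Local Notation Re := (@complex.Re R).
Local Notation Im := (@complex.Im R).

Lemma complex_ext (x y : C) : Re x = Re y -> Im x = Im y -> x = y.
Proof. by case: x => a b; case: y => c d /= -> ->. Qed.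

Lemma ReM (x y : C) : Re (x * y) = Re x * Re y - Im x * Im y.
Proof. by case: x; case: y. Qed.

Lemma ImM (x y : C) : Im (x * y) = Re x * Im y + Im x * Re y.
Proof. by case: x => a b; case: y. Qed.

Lemma ReJ (x : C) : Re (conjc x) = Re x. Proof. by case: x. Qed.
Lemma ImJ (x : C) : Im (conjc x) = - Im x. Proof. by case: x. Qed.

Lemma conjc_mul_conj (a b : C) : conjc (a * conjc b) = b * conjc a.
Proof. by apply: complex_ext; rewrite !(ReM, ImM, ReJ, ImJ); ring. Qed.

Lemma sqmodM (x y : C) : sqmod (x * y) = sqmod x * sqmod y.
Proof. by rewrite /sqmod ReM ImM; ring. Qed.

Lemma sqmod_ge0 (x : C) : 0 <= sqmod x.
Proof. by rewrite /sqmod addr_ge0 // sqr_ge0. Qed.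

Lemma sqmod0 : sqmod (0 : C) = 0.
Proof. by rewrite /sqmod /= expr0n /= addr0. Qed.

Lemma am_gm (x y z w t s : R) : 0 < t -> t * s = 1 ->
  `|x * y + z * w| <= (t * (x ^+ 2 + z ^+ 2) + s * (y ^+ 2 + w ^+ 2)) / 2.
Proof.
move=> t0 ts; set S := x ^+ 2 + z ^+ 2; set Q := y ^+ 2 + w ^+ 2.
have sq_ge0 (a b : R) : 0 <= t * a ^+ 2 + t * b ^+ 2.
  by apply: addr_ge0; apply: mulr_ge0; rewrite ?sqr_ge0 ?ltW.
have := sq_ge0 (x - s * y) (z - s * w); have := sq_ge0 (x + s * y) (z + s * w).
have -> : t * (x + s * y) ^+ 2 + t * (z + s * w) ^+ 2 =
  t * S + 2 * (t * s) * (x * y + z * w) + (t * s) * s * Q by rewrite /S /Q; ring.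
have -> : t * (x - s * y) ^+ 2 + t * (z - s * w) ^+ 2 =
  t * S - 2 * (t * s) * (x * y + z * w) + (t * s) * s * Q by rewrite /S /Q; ring.
rewrite ts !mul1r ler_norml => ? ?; apply/andP; split; lra.
Qed.

Lemma norm_ReIm_mul_conj_le (p q : C) t s : 0 < t -> t * s = 1 ->
  `|Re (p * conjc q)| <= (t * sqmod p + s * sqmod q) / 2 /\
  `|Im (p * conjc q)| <= (t * sqmod p + s * sqmod q) / 2.
Proof.
move=> t0 ts; rewrite ReM ImM ReJ ImJ /sqmod; split.
  by rewrite mulrN opprK; exact: am_gm.
rewrite mulrN addrC -mulNr; apply: le_trans (am_gm _ _ _ _ t0 ts) _.
by rewrite sqrrN [X in t * X]addrC.
Qed.

Lemma eq0_approx_mul (X : C) (M : R) : 0 <= M ->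
  (forall e : R, 0 < e -> exists a c : C,
     [/\ `|Re a| <= M, `|Im a| <= M, `|Re c| <= e, `|Im c| <= e &
         `|Re (X - a * c)| <= e /\ `|Im (X - a * c)| <= e]) -> X = 0.
Proof.
move=> M0 H; have K0 : 0 <= 1 + 2 * M by lra.
have main e : 0 < e -> `|Re X| <= e * (1 + 2 * M) /\ `|Im X| <= e * (1 + 2 * M).
  move=> e0; have [a [c [ra ia rc ic [rX iX]]]] := H e e0.
  have p1 : `|Re a * Re c| <= M * e by rewrite normrM ler_pM.
  have p2 : `|Im a * Im c| <= M * e by rewrite normrM ler_pM.
  have p3 : `|Re a * Im c| <= M * e by rewrite normrM ler_pM.
  have p4 : `|Im a * Re c| <= M * e by rewrite normrM ler_pM.
  rewrite raddfB /= ReM in rX; rewrite raddfB /= ImM in iX.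
  have n1 := ler_normB (Re a * Re c) (Im a * Im c).
  have n2 := ler_normD (Re a * Im c) (Im a * Re c).
  have n3 := ler_normD (Re X - (Re a * Re c - Im a * Im c)) (Re a * Re c - Im a * Im c).
  have n4 := ler_normD (Im X - (Re a * Im c + Im a * Re c)) (Re a * Im c + Im a * Re c).
  rewrite !subrK in n3 n4; split; lra.
by apply: complex_ext; apply: eq0_norm_le_mul K0 _ => e e0; case: (main e e0).
Qed.

Variable T : choiceType.
Implicit Types (z w : T -> C) (f g : T -> C).

Definition has_sumC z l := has_sum (Re \o z) (Re l) /\ has_sum (Im \o z) (Im l).

Definition abs_summableC z := abs_summable (Re \o z) /\ abs_summable (Im \o z).

Lemma has_sumC_approx z l (e : R) : has_sumC z l -> 0 < e -> exists s0 : seq T,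
  forall s, uniq s -> {subset s0 <= s} ->
    `|Re (l - \sum_(x <- s) z x)| < e /\ `|Im (l - \sum_(x <- s) z x)| < e.
Proof.
move=> [HR HI] e0; have [s1 S1] := HR e e0; have [s2 S2] := HI e e0.
exists (s1 ++ s2) => s u sub; split; rewrite raddfB raddf_sum.
  by apply: S1 => // x hx; apply: sub; rewrite mem_cat hx.
by apply: S2 => // x hx; apply: sub; rewrite mem_cat hx orbT.
Qed.

Lemma abs_summableC_bound z : abs_summableC z -> exists2 M : R, 0 <= M &
  forall s, uniq s -> `|Re (\sum_(x <- s) z x)| <= M /\ `|Im (\sum_(x <- s) z x)| <= M.
Proof.
move=> [[M1 H1] [M2 H2]].
have M10 : 0 <= M1 by apply: le_trans (H1 [::] isT); rewrite big_nil.
have M20 : 0 <= M2 by apply: le_trans (H2 [::] isT); rewrite big_nil.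
exists (M1 + M2) => [|s u]; first exact: addr_ge0.
rewrite !raddf_sum; split; apply: le_trans (ler_norm_sum _ _ _) _.
  by apply: le_trans (H1 s u) _; lra.
by apply: le_trans (H2 s u) _; lra.
Qed.

Lemma has_sumC_csum z : abs_summableC z -> has_sumC z (csum z).
Proof. by case=> h1 h2; split; apply: has_sum_rsum. Qed.

Lemma has_sumC_unique z l1 l2 : has_sumC z l1 -> has_sumC z l2 -> l1 = l2.
Proof.
by case=> a b [c d]; apply: complex_ext; [exact: has_sum_unique a c | exact: has_sum_unique b d].
Qed.

Lemma csum_eq z l : abs_summableC z -> has_sumC z l -> csum z = l.
Proof. by move=> b; apply: has_sumC_unique (has_sumC_csum b). Qed.

Lemma eq_has_sumC z w l : z =1 w -> has_sumC z l -> has_sumC w l.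
Proof.
by move=> e [a b]; split; [apply: eq_has_sum a | apply: eq_has_sum b] => t /=; rewrite e.
Qed.

Lemma has_sumC0 : has_sumC (fun=> 0) 0.
Proof. by split; exact: has_sum0. Qed.

Lemma has_sumCD z w lz lw : has_sumC z lz -> has_sumC w lw ->
  has_sumC (fun t => z t + w t) (lz + lw).
Proof.
move=> [a b] [c d]; split; rewrite raddfD.
  by apply: eq_has_sum (has_sumD a c) => t /=; rewrite raddfD.
by apply: eq_has_sum (has_sumD b d) => t /=; rewrite raddfD.
Qed.

Lemma has_sumCZ c z l : has_sumC z l -> has_sumC (fun t => c * z t) (c * l).
Proof.
move=> [a b]; split.
  rewrite ReM -mulNr.
  apply: eq_has_sum (has_sumD (has_sumZ (Re c) a) (has_sumZ (- Im c) b)) => t /=.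
  by rewrite ReM mulNr.
rewrite ImM; apply: eq_has_sum (has_sumD (has_sumZ (Re c) b) (has_sumZ (Im c) a)) => t /=.
by rewrite ImM.
Qed.

Lemma has_sumC_conj z l : has_sumC z l -> has_sumC (fun t => conjc (z t)) (conjc l).
Proof.
move=> [a b]; split; first by rewrite ReJ; apply: eq_has_sum a => t /=; rewrite ReJ.
rewrite ImJ -mulN1r; apply: eq_has_sum (has_sumZ (-1) b) => t /=; by rewrite ImJ mulN1r.
Qed.

Lemma has_sumC_sum (J : Type) (r : seq J) (F : J -> T -> C) (L : J -> C) :
  (forall j, has_sumC (F j) (L j)) ->
  has_sumC (fun t => \sum_(j <- r) F j t) (\sum_(j <- r) L j).
Proof.
move=> H; elim: r => [|j r IH].
  by rewrite big_nil; apply: eq_has_sumC has_sumC0 => t; rewrite big_nil.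
by rewrite big_cons; apply: eq_has_sumC (has_sumCD (H j) IH) => t; rewrite big_cons.
Qed.

Lemma l2_sum_le f s : l2 f -> uniq s -> \sum_(x <- s) sqmod (f x) <= fine (sqnorm f).
Proof.
move=> hf us.
have fn : sqnorm f \is a fin_num.
  by rewrite ge0_fin_numE // esum_ge0 // => t _; rewrite lee_fin sqmod_ge0.
by rewrite -lee_fin fineK //; apply: esum_ge_sum => // t; exact: sqmod_ge0.
Qed.

Lemma l2_of_sums_le f M : (forall s, uniq s -> \sum_(x <- s) sqmod (f x) <= M) -> l2 f.
Proof.
move=> h; apply: (@le_lt_trans _ _ M%:E); last exact: ltry.
by apply: esum_le_sums h => t; exact: sqmod_ge0.
Qed.

Lemma l2_0 : l2 (fun _ : T => 0 : C).
Proof. by apply: (@l2_of_sums_le _ 0) => s _; rewrite big1 // => *; rewrite sqmod0. Qed.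

Lemma abs_summableC_mul_conj f g : l2 f -> l2 g ->
  abs_summableC (fun t => f t * conjc (g t)).
Proof.
move=> hf hg; have o1 : 1 * 1 = 1 :> R by rewrite mulr1.
have bound s (P : C -> R) : uniq s ->
    (forall x, `|P (f x * conjc (g x))| <= (1 * sqmod (f x) + 1 * sqmod (g x)) / 2) ->
    \sum_(x <- s) `|P (f x * conjc (g x))| <= (fine (sqnorm f) + fine (sqnorm g)) / 2.
  move=> us Hx; apply: le_trans (ler_sum _ (fun x _ => Hx x)) _.
  rewrite -mulr_suml big_split /= -!mulr_sumr !mul1r ler_pM2r ?invr_gt0 ?ltr0n //.
  exact: lerD (l2_sum_le hf us) (l2_sum_le hg us).
split; exists ((fine (sqnorm f) + fine (sqnorm g)) / 2) => s us; apply: bound => // x.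
  by case: (norm_ReIm_mul_conj_le (f x) (g x) ltr01 o1).
by case: (norm_ReIm_mul_conj_le (f x) (g x) ltr01 o1).
Qed.

Lemma has_sumC_inner f g : l2 f -> l2 g -> has_sumC (fun t => f t * conjc (g t)) (inner f g).
Proof. by move=> hf hg; apply/has_sumC_csum/abs_summableC_mul_conj. Qed.

Lemma inner0r f : l2 f -> inner f (fun=> 0) = 0.
Proof.
move=> hf; apply: csum_eq; first exact: abs_summableC_mul_conj hf l2_0.
by apply: eq_has_sumC has_sumC0 => t; rewrite conjc0 mulr0.
Qed.

(* Weighted AM-GM with weights e and 1/e. *)
Lemma norm_ReIm_inner_small f g (e : R) : l2 f -> 0 < e -> (sqnorm g < (e ^+ 2)%:E)%E ->
  `|Re (inner f g)| <= e * ((fine (sqnorm f) + 1) / 2) /\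
  `|Im (inner f g)| <= e * ((fine (sqnorm f) + 1) / 2).
Proof.
move=> hf e0 hge; have hg : l2 g by rewrite /l2 (lt_trans hge) ?ltry.
have [HR HI] := has_sumC_inner hf hg.
have ge s : uniq s -> \sum_(x <- s) sqmod (g x) <= e ^+ 2.
  move=> u; rewrite -lee_fin; apply: le_trans (ltW hge).
  by apply: esum_ge_sum => // t; exact: sqmod_ge0.
have ee : e * e^-1 = 1 by rewrite mulfV // gt_eqF.
have key s : uniq s ->
    \sum_(x <- s) (e * sqmod (f x) + e^-1 * sqmod (g x)) / 2 <= e * ((fine (sqnorm f) + 1) / 2).
  move=> u; rewrite -mulr_suml big_split /= -!mulr_sumr mulrA ler_pM2r ?invr_gt0 ?ltr0n //.
  have : e^-1 * \sum_(i <- s) sqmod (g i) <= e^-1 * e ^+ 2 by rewrite ler_pM2l ?invr_gt0 ?ge.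
  rewrite expr2 mulrA mulVf ?gt_eqF // mul1r.
  have : e * \sum_(i <- s) sqmod (f i) <= e * fine (sqnorm f) by rewrite ler_pM2l ?l2_sum_le.
  rewrite mulrDr mulr1; lra.
split; [apply: has_sum_norm_le HR _ | apply: has_sum_norm_le HI _] => s u;
  apply: le_trans (ler_norm_sum _ _ _) (le_trans _ (key s u)); apply: ler_sum => x _.
  by case: (norm_ReIm_mul_conj_le (f x) (g x) e0 ee).
by case: (norm_ReIm_mul_conj_le (f x) (g x) e0 ee).
Qed.

End ComplexSum.

Section Creation.
Variables (R : realType) (I : choiceType).
Local Notation C := R[i].
Local Notation W := (seq I).
Local Notation Re := (@complex.Re R).
Local Notation Im := (@complex.Im R).
Implicit Types (v w : I -> C) (f g h : W -> C) (B : seq W) (L : seq I).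

Definition unrcons (u : W) : option (W * I) :=
  if u is x :: s then Some (belast x s, last x s) else None.

Lemma unrconsK : ocancel unrcons (fun p => rcons p.1 p.2).
Proof. by case=> [|x s] //=; rewrite -lastI. Qed.

Lemma unrcons_rcons b i : unrcons (rcons b i) = Some (b, i).
Proof. by case: b => [|y b] //=; rewrite belast_rcons last_rcons. Qed.

Lemma Tcre_rcons v f b i : Tcre v f (rcons b i) = f b * v i.
Proof. by rewrite /Tcre; case: (rcons b i) (unrcons_rcons b i) => //= x s [<- <-]. Qed.

Lemma Tcre_nil v f : Tcre v f [::] = 0.
Proof. by []. Qed.

(* The words [::] and b.i, b in B, i in L: sums over rect B L of products of
   values of creation operators factor. *)
Definition rect B L : seq W := [::] :: [seq rcons b i | b <- B, i <- L].

Lemma rect_uniq B L : uniq B -> uniq L -> uniq (rect B L).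
Proof.
move=> uB uL /=; apply/andP; split.
  by apply/allpairsPdep => -[b [i [_ _ /(congr1 size)]]]; rewrite size_rcons.
apply: allpairs_uniq => // -[b i] [c j] _ _ /= /eqP.
by rewrite eqseq_rcons => /andP [/eqP -> /eqP ->].
Qed.

Lemma rect_covers s B L :
  {subset map fst (pmap unrcons s) <= B} -> {subset map snd (pmap unrcons s) <= L} ->
  {subset s <= rect B L}.
Proof.
move=> sB sL [|x t] hu; first exact: mem_head.
have hp : (belast x t, last x t) \in pmap unrcons s.
  by rewrite mem_pmap; apply/mapP; exists (x :: t).
rewrite inE /= lastI; apply/allpairsP; exists (belast x t, last x t); split => //.
  by apply: sB; apply/mapP; exists (belast x t, last x t).
by apply: sL; apply/mapP; exists (belast x t, last x t).
Qed.

Lemma sum_rect (V : nmodType) (F : W -> V) B L : F [::] = 0 ->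
  \sum_(u <- rect B L) F u = \sum_(b <- B) \sum_(i <- L) F (rcons b i).
Proof. by move=> F0; rewrite big_cons F0 add0r big_allpairs_dep. Qed.

Lemma Tcre_l2 w h : l2 w -> l2 h -> l2 (Tcre w h).
Proof.
move=> hw hh; apply: (@l2_of_sums_le _ _ _ (fine (sqnorm h) * fine (sqnorm w))) => s us.
set B := undup (map fst (pmap unrcons s)); set L := undup (map snd (pmap unrcons s)).
have sub : {subset s <= rect B L} by apply: rect_covers => x; rewrite mem_undup.
have uR : uniq (rect B L) by rewrite rect_uniq ?undup_uniq.
apply: le_trans (ler_sum_sub_uniq (fun u => sqmod_ge0 _) us uR sub) _.
rewrite sum_rect ?sqmod0 // (eq_bigr (fun b => sqmod (h b) * \sum_(i <- L) sqmod (w i))).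
  rewrite -mulr_suml; apply: ler_pM; rewrite ?sumr_ge0 // => *;
    by rewrite ?sqmod_ge0 ?l2_sum_le ?undup_uniq.
by move=> b _; rewrite mulr_sumr; apply: eq_bigr => i _; rewrite Tcre_rcons sqmodM.
Qed.

Lemma sum_Tcre_mul_conj_rect v w g h B L :
  \sum_(u <- rect B L) Tcre v g u * conjc (Tcre w h u) =
  (\sum_(b <- B) g b * conjc (h b)) * (\sum_(i <- L) v i * conjc (w i)).
Proof.
rewrite sum_rect ?mul0r // big_distrl /=; apply: eq_bigr => b _.
by rewrite big_distrr /=; apply: eq_bigr => i _; rewrite !Tcre_rcons rmorphM /=; ring.
Qed.

(* <T_v g, T_w h> = <g, h> <v, w>, and <v, w> = 0. *)
Lemma inner_Tcre_orth v w g h : l2 v -> l2 w -> inner w v = 0 -> l2 g -> l2 h ->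
  inner (Tcre v g) (Tcre w h) = 0.
Proof.
move=> hv hw hwv hg hh.
have HX := has_sumC_inner (Tcre_l2 hv hg) (Tcre_l2 hw hh).
have HC : has_sumC (fun i => v i * conjc (w i)) 0.
  have := has_sumC_conj (has_sumC_inner hw hv); rewrite hwv conjc0.
  by apply: eq_has_sumC => i; exact: conjc_mul_conj.
have [M M0 HM] := abs_summableC_bound (abs_summableC_mul_conj hg hh).
apply: (eq0_approx_mul M0) => e e0.
have [sX SX] := has_sumC_approx HX e0; have [sC SC] := has_sumC_approx HC e0.
set B := undup (map fst (pmap unrcons sX)).
set L := undup (map snd (pmap unrcons sX) ++ sC).
have uB : uniq B := undup_uniq _; have uL : uniq L := undup_uniq _.
have sub : {subset sX <= rect B L}.
  by apply: rect_covers => x hx; rewrite mem_undup ?mem_cat ?hx.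
have [rc ic] : `|Re (0 - \sum_(i <- L) v i * conjc (w i))| < e /\
               `|Im (0 - \sum_(i <- L) v i * conjc (w i))| < e.
  by apply: SC => // x hx; rewrite mem_undup mem_cat hx orbT.
have := SX _ (rect_uniq uB uL) sub; rewrite sum_Tcre_mul_conj_rect => -[rX iX].
have [ra ia] := HM B uB.
exists (\sum_(b <- B) g b * conjc (h b)), (\sum_(i <- L) v i * conjc (w i)).
rewrite sub0r raddfN /= normrN in rc; rewrite sub0r raddfN /= normrN in ic.
by split => //; [exact: ltW | exact: ltW | split; exact: ltW].
Qed.

End Creation.

Arguments unrcons {I}.

Section KernelInclusions.
Variables (R : realType) (I : choiceType).
Local Notation C := R[i].
Local Notation W := (seq I).
Local Notation Re := (@complex.Re R).
Local Notation Im := (@complex.Im R).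
Implicit Types (v w : I -> C) (f g h : W -> C).

Definition delta (xi : W) : W -> C := fun u => (u == xi)%:R.

Lemma sqmod_delta xi u : sqmod (delta xi u) = if u == xi then 1 else 0.
Proof. by rewrite /delta /sqmod; case: (u == xi); rewrite /= ?expr1n expr0n /= addr0. Qed.

Lemma delta_l2 xi : l2 (delta xi).
Proof.
apply: (@l2_of_sums_le _ _ _ 1) => s us.
by rewrite (eq_bigr _ (fun u _ => sqmod_delta xi u)) sum_pred1 //; case: ifP.
Qed.

Lemma lhs_set_orth_Ran v g q : l2 v -> l2 g -> lhs_set v q ->
  l2 q /\ inner (Tcre v g) q = 0.
Proof.
move=> hv hg [[c ->]|[w [hw hwv] [h hh ->]]]; last first.
  by split; [exact: Tcre_l2 | exact: inner_Tcre_orth].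
have lq : l2 (fun u : W => c * Omega R u).
  apply: (@l2_of_sums_le R W _ (sqmod c)) => s us.
  under eq_bigr do rewrite sqmodM (sqmod_delta [::]).
  rewrite -mulr_sumr sum_pred1 //.
  by case: ifP => _; rewrite ?mulr1 ?mulr0 ?sqmod_ge0.
split => //; apply: csum_eq; first exact: abs_summableC_mul_conj (Tcre_l2 hv hg) lq.
apply: eq_has_sumC (@has_sumC0 R W) => -[|x s]; first by rewrite Tcre_nil mul0r.
by rewrite /Omega /= mulr0 conjc0 mulr0.
Qed.

Lemma lspan_orth_Ran v g h : l2 v -> l2 g -> lspan (lhs_set v) h ->
  has_sumC (fun t => Tcre v g t * conjc (h t)) 0.
Proof.
move=> hv hg [n [c [gk [Hg ->]]]].
have Hk k : has_sumC (fun t => conjc (c k) * (Tcre v g t * conjc (gk k t))) 0.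
  have [lq iq] := lhs_set_orth_Ran hv hg (Hg k).
  by rewrite -(mulr0 (conjc (c k))) -iq; apply/has_sumCZ/has_sumC_inner/lq/Tcre_l2.
have := has_sumC_sum (index_enum 'I_n) Hk; rewrite big1 // => H.
apply: eq_has_sumC H => t.
by rewrite rmorph_sum mulr_sumr; apply: eq_bigr => k _; rewrite rmorphM mulrCA.
Qed.

(* Approximate f by the elements of the span and use the continuity of the
   inner product: <T_v g, f> = <T_v g, f - h> is as small as f - h. *)
Lemma cspan_sub_ker_adj v f : l2 v -> cspan (lhs_set v) f -> ker_adj (Tcre v) f.
Proof.
move=> hv [hf Happ]; split => //; split=> [|g hg]; first exact: l2_0.
rewrite inner0r //; have hp := Tcre_l2 hv hg.
set K := (fine (sqnorm (Tcre v g)) + 1) / 2.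
have K0 : 0 <= K.
  by have := l2_sum_le (s := [::]) hp isT; rewrite big_nil /K => N0; rewrite divr_ge0 // addr_ge0.
have main e : 0 < e ->
    `|Re (inner (Tcre v g) f)| <= e * K /\ `|Im (inner (Tcre v g) f)| <= e * K.
  move=> e0; have [h hh hsm] := Happ e e0.
  have lfh : l2 (fun u => f u - h u) by rewrite /l2 (lt_trans hsm) ?ltry.
  have H := has_sumCD (has_sumC_inner hp lfh) (lspan_orth_Ran hv hg hh).
  rewrite addr0 in H.
  have -> : inner (Tcre v g) f = inner (Tcre v g) (fun u => f u - h u).
    apply: has_sumC_unique (has_sumC_inner hp hf) (eq_has_sumC _ H) => t.
    by rewrite -mulrDr rmorphB subrK.
  exact: norm_ReIm_inner_small.
by apply: complex_ext; apply: eq0_norm_le_mul K0 _ => e e0; case: (main e e0).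
Qed.

End KernelInclusions.

Arguments delta {R I}.

Section KernelSpan.
Variables (R : realType) (I : choiceType).
Local Notation C := R[i].
Local Notation W := (seq I).
Implicit Types (v w : I -> C) (f g h : W -> C).

Lemma has_sum_rcons (xi : W) (a : W -> R) (b : I -> R) l :
  (forall u, (forall i, u != rcons xi i) -> a u = 0) -> (forall i, a (rcons xi i) = b i) ->
  has_sum b l -> has_sum a l.
Proof.
move=> a0 ab Hb e e0; have [s0 S] := Hb e e0.
pose pr u := if unrcons u is Some p then (if p.1 == xi then Some p.2 else None) else None.
have prK : ocancel pr (rcons xi).
  move=> u; have := unrconsK u; rewrite /pr.
  by case: unrcons => // -[b' i] /= <-; case: eqP => // ->.
have a_pr u : a u = oapp b 0 (pr u).
  case E : (pr u) => [i|] /=; first by have := prK u; rewrite E /= => <-; exact: ab.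
  by apply: a0 => i; apply/eqP => ui; move: E; rewrite ui /pr unrcons_rcons /= eqxx.
exists (map (rcons xi) s0) => s us sub.
rewrite (eq_bigr _ (fun u _ => a_pr u)) sum_pmap; apply: S; first exact: pmap_uniq prK _ us.
move=> i hi; rewrite mem_pmap; apply/mapP; exists (rcons xi i).
  by apply: sub; apply/mapP; exists i.
by rewrite /pr unrcons_rcons /= eqxx.
Qed.

Lemma has_sumC_rcons (xi : W) (a : W -> C) (b : I -> C) l :
  (forall u, (forall i, u != rcons xi i) -> a u = 0) -> (forall i, a (rcons xi i) = b i) ->
  has_sumC b l -> has_sumC a l.
Proof.
move=> a0 ab [HR HI].
split; [apply: has_sum_rcons HR | apply: has_sum_rcons HI];
  by [move=> u /a0 /= ->|move=> i /=; rewrite ab].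
Qed.

Definition slice f (xi : W) : I -> C := fun i => f (rcons xi i).

Lemma slice_l2 f xi : l2 f -> l2 (slice f xi).
Proof.
move=> hf; apply: (@l2_of_sums_le _ _ _ (fine (sqnorm f))) => s us.
rewrite /slice -(big_map (rcons xi) xpredT (fun u => sqmod (f u))); apply: l2_sum_le => //.
by rewrite map_inj_uniq // => i j /rcons_inj [].
Qed.

Lemma slice_orth v f xi : l2 v -> l2 f ->
  inner (Tcre v (delta xi)) f = 0 -> inner (slice f xi) v = 0.
Proof.
move=> hv hf h0.
have H1 : has_sumC (fun i => v i * conjc (slice f xi i)) (conjc (inner (slice f xi) v)).
  have := has_sumC_conj (has_sumC_inner (slice_l2 xi hf) hv).
  by apply: eq_has_sumC => i; exact: conjc_mul_conj.
have H2 : has_sumC (fun u => Tcre v (delta xi) u * conjc (f u)) (conjc (inner (slice f xi) v)).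
  apply: (has_sumC_rcons (xi := xi)) H1 => [[|x s] ne|i]; first by rewrite Tcre_nil mul0r.
    rewrite lastI Tcre_rcons /delta; case: eqP => [e|]; last by rewrite !mul0r.
    by have := ne (last x s); rewrite -e -lastI eqxx.
  by rewrite Tcre_rcons /delta eqxx mul1r.
have := has_sumC_unique (has_sumC_inner (Tcre_l2 hv (delta_l2 R xi)) hf) H2.
by rewrite h0 => /(congr1 conjc); rewrite conjcK conjc0.
Qed.

Definition trunc f (Bs : seq W) : W -> C := fun u =>
  if unrcons u is Some p then (if p.1 \in Bs then f u else 0) else f [::].

Definition trunc_part f (Bs : seq W) (k : nat) : W -> C :=
  if k is j.+1 then Tcre (slice f (nth [::] Bs j)) (delta (nth [::] Bs j))
  else fun u => f [::] * Omega R u.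

Lemma sum_trunc_part f Bs u : uniq Bs ->
  \sum_(k < (size Bs).+1) trunc_part f Bs k u = trunc f Bs u.
Proof.
move=> uB; rewrite big_ord_recl /=.
pose F xi := Tcre (slice f xi) (delta xi) u.
rewrite (eq_bigr (fun k : 'I_(size Bs) => F (nth [::] Bs k))) //.
rewrite -(big_mkord xpredT (fun k => F (nth [::] Bs k))) -(big_nth [::] xpredT F) {}/F.
case: u => [|x s]; first by rewrite big1 ?addr0 ?mulr1 // => *; rewrite Tcre_nil.
rewrite /Omega /= mulr0 add0r lastI.
rewrite (eq_bigr (fun xi => if xi == belast x s then f (rcons (belast x s) (last x s)) else 0)).
  by rewrite sum_pred1 // /trunc unrcons_rcons.
by move=> xi _; rewrite /delta eq_sym; case: eqP => [->|]; rewrite ?mul1r ?mul0r.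
Qed.

Lemma trunc_lspan v f Bs : l2 v -> l2 f -> uniq Bs ->
  (forall xi, inner (Tcre v (delta xi)) f = 0) -> lspan (lhs_set v) (trunc f Bs).
Proof.
move=> hv hf uB hk; exists (size Bs).+1, (fun=> 1), (fun k => trunc_part f Bs k); split.
  case=> [[|j] hj] /=; first by left; exists (f [::]).
  right; exists (slice f (nth [::] Bs j)); first by split; [exact: slice_l2 | exact: slice_orth].
  by exists (delta (nth [::] Bs j)) => //; exact: delta_l2.
by apply: funext => u; rewrite -(sum_trunc_part f u uB); apply: eq_bigr => k _; rewrite mul1r.
Qed.

Lemma sqnorm_sub_trunc_le f (Bs s0 : seq W) : l2 f -> uniq s0 ->
  {subset map fst (pmap unrcons s0) <= Bs} ->
  (sqnorm (fun u => (f u - trunc f Bs u)%R) <=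
    (fine (sqnorm f) - \sum_(u <- s0) sqmod (f u))%:E)%E.
Proof.
move=> hf us0 sB.
pose out u := if unrcons u is Some p then p.1 \notin Bs else false.
have errE u : sqmod (f u - trunc f Bs u) = if out u then sqmod (f u) else 0.
  rewrite /out /trunc; case: u => [|x s] /=; first by rewrite subrr sqmod0.
  by case: ifP => _; rewrite ?subrr ?sqmod0 ?subr0.
apply: esum_le_sums => [t|s us]; first exact: sqmod_ge0.
rewrite (eq_bigr _ (fun u _ => errE u)) -big_mkcond -big_filter.
have hcat : uniq ([seq x <- s | out x] ++ s0).
  rewrite cat_uniq filter_uniq // us0 andbT /=; apply/hasPn => x hx.
  rewrite mem_filter negb_and /out; apply/orP; left.
  case E : (unrcons x) => [[b i]|] //=; rewrite negbK; apply: sB; apply/mapP.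
  by exists (b, i) => //; rewrite mem_pmap; apply/mapP; exists x.
by have := l2_sum_le hf hcat; rewrite big_cat /=; lra.
Qed.

Lemma ker_adj_sub_cspan v f : l2 v -> ker_adj (Tcre v) f -> cspan (lhs_set v) f.
Proof.
move=> hv [hf [_ hk]]; split => // e e0.
have hk0 xi : inner (Tcre v (delta xi)) f = 0.
  by have dl := delta_l2 R xi; rewrite hk ?inner0r.
have e20 : 0 < e ^+ 2 / 2 by rewrite divr_gt0 // exprn_gt0.
have fin : sqnorm f \is a fin_num.
  by rewrite ge0_fin_numE // esum_ge0 // => t _; rewrite lee_fin sqmod_ge0.
have [s0 us0 Hs0] := esum_approx (fun t => sqmod_ge0 (f t)) fin e20.
set Bs := undup (map fst (pmap unrcons s0)).
exists (trunc f Bs); first exact: trunc_lspan (undup_uniq _) hk0.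
apply: le_lt_trans (sqnorm_sub_trunc_le hf us0 _) _ => [x|]; first by rewrite mem_undup.
by rewrite lte_fin; move: Hs0; rewrite -/(sqnorm f); have := exprn_gt0 2 e0; lra.
Qed.

End KernelSpan.

Theorem corollary3p13 (R : realType) (I : choiceType)
  (dimN : exists i j : I, i <> j)
  (v : I -> R[i]) (Hv : Hsp v) (v_unit : sqnorm v = 1%E) :
  cspan (lhs_set v) = ker_adj (Tcre v).
Proof.
apply/seteqP; split => f; [exact: cspan_sub_ker_adj | exact: ker_adj_sub_cspan].
Qed.
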